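(* Let $N\cong\mathbb{Z}^n$ be a lattice and let $\Sigma$ be a complete fan in $N_{\mathbb{Q}}$. Assume there exist rays $\rho_1,\ldots,\rho_n\in\Sigma(1)$ such that their primitive generators $B=\{p_1,\ldots,p_n\}$ form a basis of the lattice $N$ and the primitive generators of all remaining rays in $\Sigma(1)$ are contained in the negative octant of $B$. Then $\rho_1,\ldots,\rho_n$ are the extremal rays of a maximal cone $\sigma\in\Sigma$ (i.e. $\operatorname{Cone}(p_1,\ldots,p_n)\in\Sigma$).
   Context: $\Sigma(1)$ is the set of rays of $\Sigma$; $p_i$ denotes the primitive lattice vector on $\rho_i$. For a finite set $S=\{s_1,\ldots,s_k\}\subset N_{\mathbb{Q}}$, its negative octant is $\{\sum_i a_i s_i:\ a_i\in\mathbb{Q},\ a_i\le 0\}$. *)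

From HB Require Import structures.
From mathcomp Require Import all_boot all_order all_algebra.
From mathcomp Require Import boolp classical_sets cardinality.
Set Implicit Arguments. Unset Strict Implicit. Unset Printing Implicit Defensive.
Import Order.TTheory GRing.Theory Num.Theory.
Local Open Scope ring_scope.
Local Open Scope classical_set_scope.

Definition NQ (n : nat) := 'rV[rat]_n.
Definition lat (n : nat) := 'rV[int]_n.

Definition toQ (n : nat) (v : lat n) : NQ n := map_mx (fun z : int => z%:~R) v.

(* standard pairing between the dual space and N_Q *)
Definition pairing (n : nat) (u v : NQ n) : rat := \sum_(i < n) u 0 i * v 0 i.

Definition Cone (n : nat) (k : nat) (g : 'I_k -> NQ n) : set (NQ n) :=
  [set v | exists a : 'I_k -> rat,
      (forall i, 0 <= a i) /\ v = \sum_(i < k) a i *: g i].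

Definition rat_poly_cone (n : nat) (C : set (NQ n)) : Prop :=
  exists k (g : 'I_k -> lat n), C = Cone (fun i => toQ (g i)).

Definition strongly_convex (n : nat) (C : set (NQ n)) : Prop :=
  forall v, C v -> C (- v) -> v = 0.

Definition face (n : nat) (tau sigma : set (NQ n)) : Prop :=
  exists u : NQ n, (forall v, sigma v -> 0 <= pairing u v) /\
    tau = [set v | sigma v /\ pairing u v = 0].

Definition fan (n : nat) (Sigma : set (set (NQ n))) : Prop :=
  [/\ finite_set Sigma,
      (forall s, Sigma s -> rat_poly_cone s /\ strongly_convex s),
      (forall s t, Sigma s -> face t s -> Sigma t) &
      (forall s t, Sigma s -> Sigma t -> face (s `&` t) s /\ face (s `&` t) t)].

Definition complete_fan (n : nat) (Sigma : set (set (NQ n))) : Prop :=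
  fan Sigma /\ forall v : NQ n, exists s, Sigma s /\ s v.

Definition is_ray (n : nat) (C : set (NQ n)) : Prop :=
  exists v : NQ n, v != 0 /\ C = Cone (fun _ : 'I_1 => v).

Definition rays (n : nat) (Sigma : set (set (NQ n))) : set (set (NQ n)) :=
  [set rho | Sigma rho /\ is_ray rho].

(* p is the primitive lattice vector on the ray rho: p is a nonzero lattice
   point of rho and every lattice point of rho is a nonnegative integer
   multiple of p (i.e. p generates the semigroup rho ∩ N) *)
Definition primitive_gen (n : nat) (rho : set (NQ n)) (p : lat n) : Prop :=
  [/\ p != 0, rho (toQ p) &
      forall w : lat n, rho (toQ w) -> exists m : nat, w = m%:R *: p].

Definition lattice_basis (n : nat) (p : 'I_n -> lat n) : Prop :=
  forall w : lat n, exists! c : 'I_n -> int, w = \sum_(i < n) c i *: p i.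

Definition neg_octant (n k : nat) (S : 'I_k -> NQ n) : set (NQ n) :=
  [set v | exists a : 'I_k -> rat,
      (forall i, a i <= 0) /\ v = \sum_(i < k) a i *: S i].

Definition maximal_cone (n : nat) (Sigma : set (set (NQ n))) (s : set (NQ n)) :=
  Sigma s /\ forall t, Sigma t -> s `<=` t -> t = s.

From HB Require Import structures.
From mathcomp Require Import all_boot all_order all_algebra.
From mathcomp Require Import boolp classical_sets cardinality.
Set Implicit Arguments.
Unset Strict Implicit.
Unset Printing Implicit Defensive.
Import Order.TTheory GRing.Theory Num.Theory.
Local Open Scope ring_scope.
Local Open Scope classical_set_scope.

(** Let v = p_1 + ... + p_n and let s be a cone of Sigma containing v (one
exists by completeness).  Every extremal ray of s spans a face of s (by
Farkas' lemma), hence is a ray of Sigma, so its generator is either a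
positive multiple of some p_l or lies in the negative octant of B.  Reading
v = sum a_i g_i off in the coordinate dual to p_l, every term is <= 0 unless
p_l is in s; as that coordinate of v is 1, all p_l lie in s.  Then no
extremal generator of s can lie in the negative octant, since its opposite
would be in s, contradicting strong convexity; so s = Cone(p_1, ..., p_n).
Any cone of Sigma containing this one contains v, hence equals it. *)

Section Pairing.
Variable n : nat.
Implicit Types u v : NQ n.

Fact pairing_is_linear u : linear_for *%R (pairing u).
Proof.
move=> c v w; rewrite /pairing mulr_sumr -big_split; apply: eq_bigr => i _.
by rewrite !mxE mulrDr mulrCA.
Qed.

HB.instance Definition _ u :=
  GRing.isLinear.Build rat (NQ n) rat *%R (pairing u) (pairing_is_linear u).

Lemma pairingC u v : pairing u v = pairing v u.
Proof. by apply: eq_bigr => i _; rewrite mulrC. Qed.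

Lemma pairing_self_gt0 v : v != 0 -> 0 < pairing v v.
Proof.
move=> v_neq0; have sq_ge0 i : 0 <= v 0 i * v 0 i by rewrite -expr2 sqr_ge0.
rewrite lt_def sumr_ge0 ?andbT //; apply: contraNN v_neq0 => /eqP v2_eq0.
apply/eqP/matrixP => i j; rewrite (ord1 i) mxE; apply/eqP.
by rewrite -sqrf_eq0 expr2; apply/eqP/(psumr_eq0P _ v2_eq0).
Qed.

End Pairing.

Section Cones.
Variable n : nat.
Implicit Types u v x y : NQ n.

Definition ray x := Cone (fun _ : 'I_1 => x).

Lemma rayP x v : ray x v <-> exists2 c, 0 <= c & v = c *: x.
Proof.
split => [[a [a_ge0 ->]]|[c c_ge0 ->]]; first by exists (a ord0); rewrite ?big_ord1.
by exists (fun=> c); rewrite big_ord1.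
Qed.

Lemma ray_id x : ray x x.
Proof. by apply/rayP; exists 1; rewrite ?scale1r. Qed.

Lemma ray_ratio x u v :
  ray x u -> ray x v -> v != 0 -> exists2 mu, 0 <= mu & u = mu *: v.
Proof.
move=> /rayP[a a_ge0 ->] /rayP[b b_ge0 ->]; rewrite scaler_eq0 negb_or => /andP[b_neq0 _].
by exists (a / b); rewrite ?divr_ge0 // scalerA divfK.
Qed.

Variables (k : nat) (g : 'I_k -> NQ n).

Lemma cone0 : Cone g 0.
Proof. by exists (fun=> 0); split => //; rewrite big1 // => i _; rewrite scale0r. Qed.

Lemma coneD x y : Cone g x -> Cone g y -> Cone g (x + y).
Proof.
move=> [a [a_ge0 ->]] [b [b_ge0 ->]]; exists (fun i => a i + b i).
by split=> [i|]; rewrite ?addr_ge0 // -big_split; apply: eq_bigr => i _; rewrite scalerDl.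
Qed.

Lemma coneZ c x : 0 <= c -> Cone g x -> Cone g (c *: x).
Proof.
move=> c_ge0 [a [a_ge0 ->]]; exists (fun i => c * a i).
by split=> [i|]; rewrite ?mulr_ge0 // scaler_sumr; apply: eq_bigr => i _; rewrite scalerA.
Qed.

Lemma cone_gen j : Cone g (g j).
Proof.
exists (fun i => (i == j)%:R); split=> [i|]; first by rewrite ler0n.
by rewrite (bigD1 j) //= eqxx scale1r big1 ?addr0 // => i /negbTE->; rewrite scale0r.
Qed.

Lemma cone_sum m (F : 'I_m -> NQ n) :
  (forall i, Cone g (F i)) -> Cone g (\sum_(i < m) F i).
Proof. by move=> CF; apply: big_ind => //; [exact: cone0 | exact: coneD]. Qed.

Lemma sub_cone m (h : 'I_m -> NQ n) : (forall i, Cone g (h i)) -> Cone h `<=` Cone g.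
Proof. by move=> Ch _ [a [a_ge0 ->]]; apply: cone_sum => i; apply: coneZ. Qed.

Lemma cone_pairing_ge0 u x :
  (forall i, 0 <= pairing u (g i)) -> Cone g x -> 0 <= pairing u x.
Proof.
move=> u_ge0 [a [a_ge0 ->]]; rewrite raddf_sum /= sumr_ge0 // => i _.
by rewrite linearZ /= mulr_ge0.
Qed.

End Cones.

Lemma cone_recl n k (a : 'I_k.+1 -> NQ n) b :
  Cone a b <-> exists2 t, 0 <= t & Cone (fun i => a (lift ord0 i)) (b - t *: a ord0).
Proof.
split=> [[l [l_ge0 ->]]|[t t_ge0 [l [l_ge0 E]]]].
  exists (l ord0) => //; exists (fun i => l (lift ord0 i)).
  by rewrite big_ord_recl addrAC subrr add0r.
exists (fun i => if unlift ord0 i is Some j then l j else t); split.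
  by move=> i; case: unliftP.
rewrite big_ord_recl unlift_none; under eq_bigr do rewrite liftK.
by rewrite -E addrC subrK.
Qed.

Lemma farkas n k (a : 'I_k -> NQ n) b :
  ~ Cone a b -> exists2 y, (forall i, 0 <= pairing y (a i)) & pairing y b < 0.
Proof.
elim: k a b => [|k IH] a b b_notin.
  have b_neq0 : b != 0 by apply: contra_notN b_notin => /eqP->; apply: cone0.
  by exists (- b) => [[]//|]; rewrite pairingC linearN oppr_lt0 pairing_self_gt0.
set a0 := a ord0; set a' := fun i => a (lift ord0 i).
have b_notin' : ~ Cone a' b.
  by move=> Cb; apply: b_notin; apply/cone_recl; exists 0; rewrite ?scale0r ?subr0.
have [y y_ge0 yb_lt0] := IH a' b b_notin'.
have [ya0_ge0|ya0_lt0] := lerP 0 (pairing y a0).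
  by exists y => // i; case: (unliftP ord0 i) => [j ->|->] //; apply: y_ge0.
(* Fourier-Motzkin step: project along [a0] onto the hyperplane [pairing y _ = 0]. *)
set c := pairing y a0; pose proj (x : NQ n) : NQ n := c *: x - pairing y x *: a0.
have proj_sum (l : 'I_k -> rat) :
    \sum_(i < k) l i *: proj (a' i) = proj (\sum_(i < k) l i *: a' i).
  rewrite /proj [pairing y _]raddf_sum /= scaler_sumr scaler_suml -sumrB.
  apply: eq_bigr => i _.
  by rewrite [pairing y (_ *: _)]linearZ /= scalerBr !scalerA mulrC.
have proj_b_notin : ~ Cone (fun i => proj (a' i)) (proj b).
  move=> [l [l_ge0]]; rewrite proj_sum; set s := \sum_(i < k) _ => proj_bs.
  have ys_ge0 : 0 <= pairing y s.
    by apply: (cone_pairing_ge0 y_ge0); exists l.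
  have c_neq0 : c != 0 := ltr0_neq0 ya0_lt0.
  have proj_bs0 : proj (b - s) = 0.
    rewrite /proj !linearB /= scalerBl opprD addrACA -opprD.
    by rewrite -/(proj b) -/(proj s) proj_bs subrr.
  have bs_a0 : b - s = (pairing y (b - s) / c) *: a0.
    apply: (scalerI c_neq0); rewrite scalerA mulrCA divff // mulr1.
    by apply/eqP; rewrite -subr_eq0 -/(proj (b - s)) proj_bs0.
  apply: b_notin; apply/cone_recl; exists (pairing y (b - s) / c).
    by rewrite ler_ndivlMr // mul0r linearB subr_le0 (le_trans (ltW yb_lt0)).
  by exists l; split => //; rewrite -bs_a0 opprB addrC subrK.
have [z z_ge0 zb_lt0] := IH _ _ proj_b_notin.
have pairing_proj x : pairing (c *: z - pairing z a0 *: y) x = pairing z (proj x).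
  rewrite pairingC linearB !linearZ /= !(pairingC x) linearB !linearZ /=.
  by rewrite [pairing z a0 * _]mulrC.
exists (c *: z - pairing z a0 *: y); last by rewrite pairing_proj.
move=> i; rewrite pairing_proj; case: (unliftP ord0 i) => [j ->|->]; first exact: z_ge0.
by rewrite /proj subrr linear0.
Qed.

Section Extremal.
Variable n : nat.

Definition extremal (C : set (NQ n)) (x : NQ n) :=
  x != 0 /\ forall y z, C y -> C z -> y + z = x -> exists2 c, 0 <= c & y = c *: x.

Lemma strongly_convex_addr_eq0 (C : set (NQ n)) x y :
  strongly_convex C -> C x -> C y -> x + y = 0 -> x = 0.
Proof.
by move=> scC Cx Cy /eqP; rewrite addr_eq0 => /eqP xE; apply: scC; rewrite // xE opprK.
Qed.

Variables (k : nat) (g : 'I_k -> NQ n).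

Definition restr (S : {set 'I_k}) i := if i \in S then g i else 0.

Lemma restr_setD1 S j i : i != j -> restr (S :\ j) i = restr S i.
Proof. by rewrite /restr in_setD1 => ->. Qed.

Lemma cone_restr_sub S : Cone (restr S) `<=` Cone g.
Proof.
by apply: sub_cone => i; rewrite /restr; case: ifP => _; [apply: cone_gen | apply: cone0].
Qed.

Lemma extremal_restr S j :
  strongly_convex (Cone g) -> Cone g `<=` Cone (restr S) -> j \in S ->
  ~ Cone (restr (S :\ j)) (g j) -> extremal (Cone g) (g j).
Proof.
move=> scg gen_S jS gj_notin; split.
  by apply: contra_notN gj_notin => /eqP->; apply: cone0.
move=> y z /gen_S [al [al_ge0 ->]] /gen_S [be [be_ge0 ->]] sum_gj.
pose R f := \sum_(i < k | i != j) f i *: restr S i.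
have sumE f : \sum_(i < k) f i *: restr S i = f j *: g j + R f.
  by rewrite (bigD1 j) //= /restr jS.
have R_cone f : (forall i, 0 <= f i) -> Cone g (R f).
  move=> f_ge0; apply: big_ind => [|u v|i _]; [exact: cone0 | exact: coneD |].
  by apply: coneZ => //; apply: cone_restr_sub; apply: cone_gen.
have R_coneD1 f : (forall i, 0 <= f i) -> Cone (restr (S :\ j)) (R f).
  move=> f_ge0; apply: big_ind => [|u v|i ij]; [exact: cone0 | exact: coneD |].
  by rewrite -(restr_setD1 S ij); apply: coneZ => //; apply: cone_gen.
pose ga i := al i + be i.
have ga_ge0 i : 0 <= ga i by rewrite addr_ge0.
have gjE : g j = ga j *: g j + R ga.
  by rewrite -sumE -sum_gj -big_split; apply: eq_bigr => i _; rewrite /ga scalerDl.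
have [ga_lt1|ga_ge1] := ltrP (ga j) 1.
  case: gj_notin; have ga_neq1 : 1 - ga j != 0 by rewrite subr_eq0 gt_eqF.
  have -> : g j = (1 - ga j)^-1 *: R ga.
    apply: (scalerI ga_neq1); rewrite scalerA divff // scale1r scalerBl scale1r.
    by rewrite {1}gjE addrAC subrr add0r.
  by apply: coneZ; [rewrite invr_ge0 subr_ge0 ltW | exact: R_coneD1].
(* [R al] and [R be + (ga j - 1) *: g j] are opposite vectors of the cone. *)
have R_al0 : R al = 0.
  apply: (strongly_convex_addr_eq0 scg (R_cone _ al_ge0) _
           (y := R be + (ga j - 1) *: g j)).
    by apply: coneD; [exact: R_cone | apply: coneZ; [rewrite subr_ge0 | exact: cone_gen]].
  rewrite addrA; have -> : R al + R be = R ga.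
    by rewrite -big_split; apply: eq_bigr => i _; rewrite /ga scalerDl.
  have -> : R ga = g j - ga j *: g j by rewrite {1}gjE addrAC subrr add0r.
  by rewrite scalerBl scale1r addrA subrK subrr.
by exists (al j) => //; rewrite sumE R_al0 addr0.
Qed.

Lemma extremal_generating_subset :
  strongly_convex (Cone g) ->
  exists S, Cone g `<=` Cone (restr S) /\ {in S, forall j, extremal (Cone g) (g j)}.
Proof.
move=> scg; pose gen S := `[< Cone g `<=` Cone (restr S) >].
have restr_setT : restr [set: 'I_k]%SET = g.
  by apply/funext => i; rewrite /restr finset.in_setT.
have gen_setT : gen [set: 'I_k]%SET by apply/asboolP; rewrite restr_setT.
(* A generating subset of minimal size consists of extremal generators. *)
case: (arg_minnP (fun S : {set 'I_k} => #|S|) gen_setT) => S /asboolP gen_S S_min.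
exists S; split => // j jS.
apply: contrapT => /(contra_not (extremal_restr scg gen_S jS))/contrapT gj_in.
have gen_SD1 : gen (S :\ j).
  apply/asboolP; apply: (subset_trans gen_S); apply: sub_cone => i.
  have [->|ij] := eqVneq i j; first by rewrite /restr jS; exact: gj_in.
  by rewrite -(restr_setD1 S ij); apply: cone_gen.
by have := S_min _ gen_SD1; rewrite (cardsD1 j S) jS ltnn.
Qed.

Lemma extremal_decomp w :
  strongly_convex (Cone g) -> Cone g w ->
  exists a : 'I_k -> rat, [/\ forall i, 0 <= a i,
    forall i, a i != 0 -> extremal (Cone g) (g i) & w = \sum_(i < k) a i *: g i].
Proof.
move=> scg Cw; have [S [gen_S S_ext]] := extremal_generating_subset scg.
have [a [a_ge0 ->]] := gen_S w Cw; exists (fun i => if i \in S then a i else 0); split.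
- by move=> i; case: ifP.
- by move=> i; case: ifP => [/S_ext|_ /eqP].
- by apply: eq_bigr => i _; rewrite /restr; case: ifP; rewrite ?scaler0 ?scale0r.
Qed.

End Extremal.

Section Exposure.
Variables (n k : nat) (g : 'I_k -> NQ n) (j : 'I_k).
Hypotheses (scg : strongly_convex (Cone g)) (gj_ext : extremal (Cone g) (g j)).

Lemma extremal_separation i : exists u : NQ n,
  [/\ forall m, 0 <= pairing u (g m), pairing u (g j) = 0
    & ray (g j) (g i) \/ 0 < pairing u (g i)].
Proof.
have pairing0l x : pairing 0 x = 0 by rewrite pairingC linear0.
have [gi_ray|gi_notray] := pselect (ray (g j) (g i)).
  by exists 0; split=> [m||]; rewrite ?pairing0l //; left.
pose a m := if unlift ord0 m is Some m' then g m' else - g j.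
have a_lift : (fun m => a (lift ord0 m)) = g by apply/funext => m; rewrite /a liftK.
have [|y y_ge0 ygi_lt0] := @farkas _ _ a (- g i).
  move=> /cone_recl[t t_ge0]; rewrite a_lift /a unlift_none scalerN opprK => CY.
  apply: gi_notray; move: t_ge0; rewrite le_eqVlt => /predU1P[t0|t_gt0].
    apply/rayP; exists 0; rewrite // scale0r.
    apply: (strongly_convex_addr_eq0 scg (cone_gen g i) CY).
    by rewrite -t0 scale0r addr0 subrr.
  have t_neq0 : t != 0 := lt0r_neq0 t_gt0.
  have [c c_ge0 giE] : exists2 c, 0 <= c & t^-1 *: g i = c *: g j.
    apply: (gj_ext.2 _ (t^-1 *: (- g i + t *: g j))).
    - by apply: coneZ; [rewrite invr_ge0 ltW | exact: cone_gen].
    - by apply: coneZ; [rewrite invr_ge0 ltW |].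
    - by rewrite -scalerDr addNKr scalerA mulVf // scale1r.
  apply/rayP; exists (t * c); first by rewrite mulr_ge0 // ltW.
  by rewrite -scalerA -giE scalerA divff // scale1r.
exists y; split.
- by move=> m; have := y_ge0 (lift ord0 m); rewrite /a liftK.
- apply/eqP; rewrite eq_le.
  have := y_ge0 ord0; rewrite /a unlift_none linearN oppr_ge0 => ->.
  by have := y_ge0 (lift ord0 j); rewrite /a liftK.
- by right; rewrite -oppr_lt0 -linearN.
Qed.

Lemma extremal_face : face (ray (g j)) (Cone g).
Proof.
(* The sum of the functionals given by [extremal_separation] exposes the ray. *)
have [u u_sep] := choice extremal_separation.
have pairingE x : pairing (\sum_(i < k) u i) x = \sum_(i < k) pairing (u i) x.
  by rewrite pairingC raddf_sum; apply: eq_bigr => i _; rewrite pairingC.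
have u_ge0 i x : Cone g x -> 0 <= pairing (u i) x.
  by apply: cone_pairing_ge0 => m; have [] := u_sep i.
have sum_ge0 x : Cone g x -> 0 <= pairing (\sum_(i < k) u i) x.
  by move=> Cx; rewrite pairingE sumr_ge0 // => i _; apply: u_ge0.
exists (\sum_(i < k) u i); split => //; apply/seteqP; split => [_ /rayP[c c_ge0 ->]|v].
  split; first by apply: coneZ => //; apply: cone_gen.
  by rewrite linearZ /= pairingE big1 ?mulr0 // => i _; have [] := u_sep i.
move=> [[a [a_ge0 ->]]]; rewrite raddf_sum /= => sum0.
apply: cone_sum => m; have [->|am_neq0] := eqVneq (a m) 0.
  by rewrite scale0r; apply: cone0.
have : pairing (\sum_(i < k) u i) (a m *: g m) = 0.
  apply: (psumr_eq0P _ sum0) => // i _.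
  by apply: sum_ge0; apply: coneZ => //; apply: cone_gen.
rewrite linearZ /= => /eqP; rewrite mulf_eq0 (negbTE am_neq0) => /eqP.
rewrite pairingE => /psumr_eq0P umgm0; have [_ _ [gm_ray|]] := u_sep m.
  by apply: coneZ.
by rewrite umgm0 ?ltxx // => i _; apply: u_ge0; apply: cone_gen.
Qed.

End Exposure.

Section Lattice.
Variable n : nat.

Fact toQ_is_zmod_morphism : zmod_morphism (@toQ n).
Proof. by move=> v w; apply/matrixP => i j; rewrite !mxE intrB. Qed.

HB.instance Definition _ :=
  GRing.isZmodMorphism.Build (lat n) (NQ n) (@toQ n) toQ_is_zmod_morphism.

Lemma toQZ (c : int) (w : lat n) : toQ (c *: w) = c%:~R *: toQ w.
Proof. by apply/matrixP => i j; rewrite !mxE intrM. Qed.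

Lemma toQ_eq0 (w : lat n) : (toQ w == 0) = (w == 0).
Proof.
apply/eqP/eqP => [/matrixP w0|->]; last exact: raddf0.
by apply/matrixP => i j; have /eqP := w0 i j; rewrite !mxE intr_eq0 => /eqP.
Qed.

Lemma ray_primitive_gen (w : lat n) : w != 0 -> exists q, primitive_gen (ray (toQ w)) q.
Proof.
move=> w_neq0; have [c0 wc0_neq0] : exists c0, w 0 c0 != 0.
  apply/existsP; apply: contraNT w_neq0; rewrite negb_exists => /forallP w0.
  by apply/eqP/matrixP => i j; rewrite (ord1 i) mxE; apply/eqP/negbNE/w0.
have coord_neq0 q : ray (toQ w) (toQ q) -> q != 0 -> q 0 c0 != 0.
  move=> q_ray; rewrite -toQ_eq0 => q_neq0.
  have [mu _ wE] := ray_ratio (ray_id _) q_ray q_neq0.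
  have /matrixP/(_ 0 c0) := wE; rewrite !mxE => wc0E.
  by apply: contraNN wc0_neq0 => /eqP qc0; rewrite -(intr_eq0 rat) wc0E qc0 mulr0.
(* A nonzero lattice point of the ray with minimal [c0]-coordinate is primitive. *)
pose P m := `[< exists q, [/\ ray (toQ w) (toQ q), q != 0 & absz (q 0 c0) = m] >].
have Pw : P (absz (w 0 c0)) by apply/asboolP; exists w; split => //; apply: ray_id.
case: (ex_minnP (ex_intro P _ Pw)) => m /asboolP[q [q_ray q_neq0 qm]] m_min.
exists q; split => // z z_ray.
have [mu mu_ge0 zE] : exists2 mu, 0 <= mu & toQ z = mu *: toQ q.
  by apply: ray_ratio z_ray q_ray _; rewrite toQ_eq0.
have /andP[t_le t_lt] := truncn_itv mu_ge0; set t := Num.truncn mu in t_le t_lt.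
exists t; apply/eqP; rewrite -subr_eq0; set z' := z - _; apply/negPn/negP => z'_neq0.
have z'E : toQ z' = (mu - t%:R) *: toQ q.
  by rewrite raddfB /= (toQZ t%:R q) mulrz_nat zE scalerBl.
have z'_ray : ray (toQ w) (toQ z') by rewrite z'E; apply: coneZ; rewrite ?subr_ge0.
have /m_min : P (absz (z' 0 c0)) by apply/asboolP; exists z'.
rewrite -qm leqNgt => /negP; apply.
have /matrixP/(_ 0 c0) := z'E; rewrite !mxE => z'c0E.
rewrite -ltz_nat !abszE -(ltr_int rat) !intr_norm z'c0E normrM.
rewrite ger0_norm ?subr_ge0 // gtr_pMl ?normr_gt0 ?intr_eq0 ?coord_neq0 //.
by rewrite ltrBlDr addrC natr1.
Qed.

End Lattice.

Lemma lattice_basis_dual n (p : 'I_n -> lat n) : lattice_basis p ->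
  exists U : 'I_n -> NQ n, forall l m, pairing (U l) (toQ (p m)) = (l == m)%:R.
Proof.
move=> p_basis.
have /choice[C C_coord] : forall k : 'I_n,
    exists c : 'I_n -> int, delta_mx 0 k = \sum_(i < n) c i *: p i.
  by move=> k; have [c [c_coord _]] := p_basis (delta_mx 0 k); exists c.
exists (fun l => \row_k (C k l)%:~R) => l m.
pose d i := \sum_(k < n) p m 0 k * C k i.
have pmE : p m = \sum_(i < n) d i *: p i.
  rewrite {1}(row_sum_delta (p m)); under eq_bigr do rewrite C_coord scaler_sumr.
  rewrite exchange_big; apply: eq_bigr => i _; rewrite scaler_suml.
  by apply: eq_bigr => k _; rewrite scalerA.
have pmE' : p m = \sum_(i < n) (i == m)%:R *: p i.
  by rewrite (bigD1 m) //= eqxx scale1r big1 ?addr0 // => i /negbTE->; rewrite scale0r.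
have [c [_ c_uniq]] := p_basis (p m).
have -> : pairing (\row_k (C k l)%:~R) (toQ (p m)) = (d l)%:~R.
  by rewrite /pairing rmorph_sum; apply: eq_bigr => k _; rewrite !mxE rmorphM mulrC.
have d_delta : d = fun i => (i == m)%:R by rewrite -(c_uniq _ pmE) (c_uniq _ pmE').
by rewrite d_delta; case: eqP.
Qed.

Lemma neg_octantZ n k (S : 'I_k -> NQ n) c x :
  0 <= c -> neg_octant S x -> neg_octant S (c *: x).
Proof.
move=> c_ge0 [b [b_le0 ->]]; exists (fun i => c * b i); split.
  by move=> i; rewrite mulr_ge0_le0.
by rewrite scaler_sumr; apply: eq_bigr => i _; rewrite scalerA.
Qed.

Section FanWithBasisRays.
Variables (n : nat) (Sigma : set (set (NQ n))).
Variables (rho : 'I_n -> set (NQ n)) (p : 'I_n -> lat n) (U : 'I_n -> NQ n).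
Hypotheses (Sigma_fan : fan Sigma) (p_prim : forall i, primitive_gen (rho i) (p i))
  (U_dual : forall l m, pairing (U l) (toQ (p m)) = (l == m)%:R)
  (other_rays_neg : forall (r : set (NQ n)) (q : lat n),
      rays Sigma r -> (forall i, r <> rho i) -> primitive_gen r q ->
      neg_octant (fun i => toQ (p i)) (toQ q)).

Local Notation sigma := (Cone (fun i => toQ (p i))).

Lemma dual_coord (b : 'I_n -> rat) l :
  pairing (U l) (\sum_(j < n) b j *: toQ (p j)) = b l.
Proof.
rewrite raddf_sum (bigD1 l) //= big1 ?addr0 => [|j /negbTE jl].
  by rewrite linearZ /= U_dual eqxx mulr1.
by rewrite linearZ /= U_dual eq_sym jl mulr0.
Qed.

Lemma extremal_gen_cases k (g : 'I_k -> lat n) i :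
  Sigma (Cone (fun i => toQ (g i))) -> extremal (Cone (fun i => toQ (g i))) (toQ (g i)) ->
  (exists l, exists2 c, 0 < c & toQ (g i) = c *: toQ (p l))
  \/ neg_octant (fun i => toQ (p i)) (toQ (g i)).
Proof.
have [_ Sigma_cone Sigma_face _] := Sigma_fan.
move=> Sg gi_ext; have [_ scg] := Sigma_cone _ Sg.
have ray_gi : rays Sigma (ray (toQ (g i))).
  split; first exact: Sigma_face Sg (extremal_face scg gi_ext).
  by exists (toQ (g i)); split => //; case: gi_ext.
have [[l rho_l]|not_rho] := pselect (exists l, ray (toQ (g i)) = rho l).
  left; exists l; have [pl_neq0 pl_ray _] := p_prim l; rewrite -rho_l in pl_ray.
  have /rayP[c c_ge0 plE] := pl_ray; have c_neq0 : c != 0.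
    by apply: contraNneq pl_neq0 => c0; rewrite -toQ_eq0 plE c0 scale0r.
  exists c^-1; first by rewrite invr_gt0 lt_def c_neq0.
  by rewrite plE scalerA mulVf ?scale1r.
right; have gi_neq0 : g i != 0 by rewrite -toQ_eq0; case: gi_ext.
have [q q_prim] := ray_primitive_gen gi_neq0.
have q_neg := other_rays_neg ray_gi (fun l E => not_rho (ex_intro _ l E)) q_prim.
have [_ _ /(_ _ (ray_id _))[m ->]] := q_prim.
by rewrite toQZ; apply: neg_octantZ; rewrite // ler0z ler0n.
Qed.

Local Notation v := (\sum_(i < n) toQ (p i)).

Lemma sigma_sub_cone k (g : 'I_k -> lat n) :
  Sigma (Cone (fun i => toQ (g i))) -> Cone (fun i => toQ (g i)) v ->
  sigma `<=` Cone (fun i => toQ (g i)).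
Proof.
move=> Sg Cv; have [_ Sigma_cone _ _] := Sigma_fan; have [_ scg] := Sigma_cone _ Sg.
apply: sub_cone => l; apply: contrapT => pl_notin.
have Ulv : pairing (U l) v = 1.
  rewrite -(dual_coord (fun=> 1) l); congr pairing.
  by apply: eq_bigr => j _; rewrite scale1r.
have [a [a_ge0 a_ext vE]] := extremal_decomp scg Cv.
suff : pairing (U l) v <= 0 by rewrite Ulv ler10.
rewrite vE raddf_sum /= sumr_le0 // => i _; rewrite linearZ /=.
have [->|ai_neq0] := eqVneq (a i) 0; first by rewrite mul0r.
rewrite mulr_ge0_le0 //.
case: (extremal_gen_cases Sg (a_ext i ai_neq0)) => [[m [c c_gt0 giE]]|[b [b_le0 ->]]];
  last by rewrite dual_coord.
rewrite giE linearZ /= U_dual; have [lm|] := eqVneq l m; last by rewrite mulr0.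
case: pl_notin; have -> : toQ (p l) = c^-1 *: toQ (g i).
  by rewrite giE lm scalerA mulVf ?scale1r ?gt_eqF.
by apply: coneZ; [rewrite invr_ge0 ltW | apply: cone_gen].
Qed.

Lemma cone_sub_sigma k (g : 'I_k -> lat n) :
  Sigma (Cone (fun i => toQ (g i))) -> sigma `<=` Cone (fun i => toQ (g i)) ->
  Cone (fun i => toQ (g i)) `<=` sigma.
Proof.
move=> Sg sub; have [_ Sigma_cone _ _] := Sigma_fan; have [_ scg] := Sigma_cone _ Sg.
move=> _ /(extremal_decomp scg)[a [a_ge0 a_ext ->]].
apply: cone_sum => i; have [->|ai_neq0] := eqVneq (a i) 0.
  by rewrite scale0r; apply: cone0.
apply: coneZ => //; have gi_ext := a_ext i ai_neq0.
have [[m [c c_gt0 ->]]|[b [b_le0 giE]]] := extremal_gen_cases Sg gi_ext.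
  by apply: coneZ; [apply: ltW | apply: cone_gen].
(* [- g i] lies in sigma, hence in the strongly convex cone along with [g i]. *)
case: gi_ext => /eqP[]; apply: scg; first exact: cone_gen.
apply: sub; rewrite giE -sumrN; exists (fun j => - b j); split => [j|].
  by rewrite oppr_ge0.
by apply: eq_bigr => j _; rewrite scaleNr.
Qed.

Lemma cone_eq_sigma s : Sigma s -> s v -> s = sigma.
Proof.
move=> Ss sv; have [_ Sigma_cone _ _] := Sigma_fan.
have [[k [g sE]] _] := Sigma_cone _ Ss; rewrite sE in Ss sv *.
have sub := sigma_sub_cone Ss sv.
by apply/seteqP; split => //; apply: cone_sub_sigma.
Qed.

End FanWithBasisRays.

Theorem mainTheorem2 (n : nat) (Sigma : set (set (NQ n)))
    (rho : 'I_n -> set (NQ n)) (p : 'I_n -> lat n) :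
  complete_fan Sigma ->
  (forall i, rays Sigma (rho i)) ->
  (forall i, primitive_gen (rho i) (p i)) ->
  lattice_basis p ->
  (forall (r : set (NQ n)) (q : lat n),
      rays Sigma r -> (forall i, r <> rho i) -> primitive_gen r q ->
      neg_octant (fun i => toQ (p i)) (toQ q)) ->
  maximal_cone Sigma (Cone (fun i => toQ (p i))).
Proof.
move=> [Sigma_fan Sigma_complete] _ p_prim /lattice_basis_dual[U U_dual] other_neg.
have sigma_eq := cone_eq_sigma Sigma_fan p_prim U_dual other_neg.
have sigma_v : Cone (fun i => toQ (p i)) (\sum_(i < n) toQ (p i)).
  by apply: cone_sum => i; apply: cone_gen.
have [s [Ss sv]] := Sigma_complete (\sum_(i < n) toQ (p i)).
split; first by rewrite -(sigma_eq s).
by move=> t St sigma_t; apply: sigma_eq => //; apply: sigma_t.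
Qed.
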